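(* Let $f\in\mathcal{F}(\mathbb{L})$ and let $g:\mathbb{R}_{\ge0}\to\mathbb{R}$ satisfy: (1) $g$ is $1$-periodic; (2) $g(0)\neq0$; (3) the even extension of $g$ to $\mathbb{R}$ has a $1$-periodic Fourier series $S_N(\xi)=\sum_{k=0}^N a_k\cos(2\pi k\xi)$ with all coefficients $a_k\ge0$; (4) $S_N(\xi)\to g(\xi)$ as $N\to\infty$ for every $\xi$. Then $|g|\,f\in\mathcal{F}(\mathbb{L})$.
   Context: $\mathbb{L}=\{x\in\mathbb{R}\setminus\mathbb{Q}:\ \forall n\in\mathbb{N}\ \exists q\in\mathbb{N}\text{ with }\|qx\|<q^{-n}\}$ is the set of Liouville numbers, where $\|x\|=\min_{m\in\mathbb{Z}}|x-m|$. For a finite Borel measure $\mu$ on $\mathbb{R}$, $\hat\mu(\xi)=\int e^{-2\pi i x\xi}\,d\mu(x)$. For a Borel set $E\subset\mathbb{R}$, $\mathcal{P}(E)$ denotes the Borel probability measures $\mu$ on $\mathbb{R}$ with $\mu(\mathbb{R}\setminus E)=0$. For a function $f$ with values in $\mathbb{R}_{\ge0}$ defined at least on $[M_0,\infty)$ for some $M_0$, we write $f\in\mathcal{F}(E)$ if there exist $\mu\in\mathcal{P}(E)$ and constants $c,M>0$ such that $|\hat\mu(\xi)|\le c\,f(|\xi|)$ for all $\xi\in\mathbb{R}$ with $|\xi|\ge M$. *)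

From HB Require Import structures.
From mathcomp Require Import all_boot all_order all_algebra.
From mathcomp Require Import all_classical all_reals all_analysis.
Set Implicit Arguments. Unset Strict Implicit. Unset Printing Implicit Defensive.
Import Order.TTheory GRing.Theory Num.Theory.
Local Open Scope classical_set_scope.
Local Open Scope ring_scope.

Definition dist_Z (R : realType) (x : R) : R :=
  inf [set `|x - m%:~R| | m in [set: int]].

Definition Liouville (R : realType) : set R :=
  [set x : R | (~ exists r : rat, x = ratr r) /\
     forall n : nat, exists q : nat, (0 < q)%N /\
       dist_Z (q%:R * x) < (q%:R ^+ n)^-1].

(* Fourier transform \hat mu(xi) = \int e^{-2 pi i x xi} d mu(x), given by its
   real and imaginary parts; fourier_abs mu xi = |\hat mu(xi)|. *)
Definition fourier_re (R : realType) (mu : probability R R) (xi : R) : R :=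
  Rintegral mu setT (fun x => cos (2 * pi * x * xi)).
Definition fourier_im (R : realType) (mu : probability R R) (xi : R) : R :=
  - Rintegral mu setT (fun x => sin (2 * pi * x * xi)).
Definition fourier_abs (R : realType) (mu : probability R R) (xi : R) : R :=
  Num.sqrt (fourier_re mu xi ^+ 2 + fourier_im mu xi ^+ 2).

Definition supported_on (R : realType) (mu : probability R R) (E : set R) : Prop :=
  mu (~` E) = 0%E.

Definition in_F (R : realType) (E : set R) (f : R -> R) : Prop :=
  exists (mu : probability R R) (c M : R),
    supported_on mu E /\ 0 < c /\ 0 < M /\
    forall xi : R, M <= `|xi| -> fourier_abs mu xi <= c * f `|xi|.

(* Fourier cosine coefficients of the even extension G(x) = g(|x|) of g,
   computed over the period [-1/2, 1/2]:
   a_0 = \int G, a_k = 2 \int G(x) cos(2 pi k x) dx (k >= 1). *)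
Definition even_ext (R : realType) (g : R -> R) : R -> R := fun x => g `|x|.

Definition cos_coef (R : realType) (g : R -> R) (k : nat) : R :=
  (if k == 0%N then 1 else 2) *
  Rintegral (@lebesgue_measure R) `[(- 2^-1), 2^-1]
     (fun x => even_ext g x * cos (2 * pi * k%:R * x)).

Definition cos_partial_sum (R : realType) (g : R -> R) (N : nat) (xi : R) : R :=
  \sum_(0 <= k < N.+1) cos_coef g k * cos (2 * pi * k%:R * xi).

From HB Require Import structures.
From mathcomp Require Import all_boot all_order all_algebra.
From mathcomp Require Import all_classical all_reals all_analysis.
From mathcomp Require Import measurable_realfun ring lra.
Set Implicit Arguments.
Unset Strict Implicit.
Unset Printing Implicit Defensive.
Import Order.TTheory GRing.Theory Num.Theory.
Import numFieldNormedType.Exports.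
Local Open Scope classical_set_scope.
Local Open Scope ring_scope.

(* The cosine coefficients a_k of g are nonnegative
   and add up to g(0) > 0, so nu = sum_k a_k / (2 g(0)) (mu(. - k) + mu(. + k))
   is a probability measure.  Liouville numbers are invariant under integer
   translations, so nu is still carried by L; translating by +k and -k multiplies
   \hat mu(xi) by e^(-2 pi i k xi) and e^(2 pi i k xi), hence
   \hat nu(xi) = \hat mu(xi) sum_k a_k cos(2 pi k xi) / g(0)
               = \hat mu(xi) g(|xi|) / g(0). *)

Definition translation (R : realType) (c : R) : R -> R := fun x => x + c.

Lemma measurable_translation (R : realType) (c : R) :
  measurable_fun setT (translation c).
Proof. exact: measurable_funD. Qed.

HB.instance Definition _ (R : realType) (c : R) :=
  isMeasurableFun.Build _ _ _ _ (translation c) (measurable_translation c).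

Lemma dist_Z_addz (R : realType) (x : R) (n : int) :
  dist_Z (x + n%:~R) = dist_Z x.
Proof.
rewrite /dist_Z; congr inf; apply/seteqP; split => _ [m _ <-].
- by exists (m - n) => //; rewrite intrB; congr `|_|; lra.
- by exists (m + n) => //; rewrite intrD; congr `|_|; lra.
Qed.

Lemma Liouville_addz (R : realType) (x : R) (n : int) :
  Liouville x -> Liouville (x + n%:~R).
Proof.
move=> [x_irr x_approx]; split.
  move=> [r xnr]; apply: x_irr; exists (r - n%:~R).
  by rewrite rmorphB /= rmorph_int -xnr addrK.
move=> k; have [q [q_gt0 qx_close]] := x_approx k; exists q; split => //.
have -> : q%:R * (x + n%:~R) = q%:R * x + (q%:Z * n)%:~R :> R.
  by rewrite intrM mulrDr.
by rewrite dist_Z_addz.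
Qed.

Lemma preimage_translation_Liouville (R : realType) (n : int) :
  translation n%:~R @^-1` (@Liouville R) = @Liouville R.
Proof.
apply/seteqP; split => x /= xL; last exact: Liouville_addz.
by have := Liouville_addz (- n) xL; rewrite intrN addrK.
Qed.

Lemma eseries_EFin (R : realType) (u : nat -> R) (l : R) :
  (fun N => \sum_(0 <= k < N) u k) @ \oo --> l ->
  (\sum_(k <oo) (u k)%:E = l%:E)%E.
Proof.
move=> u_cvg; under eq_fun do rewrite sumEFin.
by rewrite -(cvg_lim _ u_cvg) // -EFin_lim //; apply/cvg_ex; exists l.
Qed.

Section bounded_integral.
Context d (T : measurableType d) (R : realType) (P : probability T R).

Lemma integrable_le1 (h : T -> R) : measurable_fun setT h ->
  (forall x, `|h x| <= 1) -> P.-integrable setT (EFin \o h).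
Proof.
move=> mh h_le1; apply: measurable_bounded_integrable => //.
  by rewrite (le_lt_trans (probability_le1 _ _)) ?ltry.
by exists 1; split => // M M_gt1 x _; exact: le_trans (h_le1 x) (ltW M_gt1).
Qed.

Lemma integral_add1 (h : T -> R) : measurable_fun setT h ->
  (forall x, `|h x| <= 1) ->
  (\int[P]_x (h x + 1)%:E = (Rintegral P setT h + 1)%:E)%E.
Proof.
move=> mh h_le1; have one_le1 (x : T) : `|(fun=> 1 : R) x| <= 1 by rewrite normr1.
rewrite integralD_EFin //; [|exact: integrable_le1|exact: integrable_le1 one_le1].
rewrite integral_cst // [X in (1 * X)%E]probability_setT mul1e.
rewrite EFinD /Rintegral fineK //.
exact/integrable_fin_num/integrable_le1.
Qed.

End bounded_integral.

Lemma cos_addsub (R : realType) (A B : R) :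
  cos (A + B) + cos (A - B) = 2 * cos B * cos A.
Proof. by rewrite cosD cosB; ring. Qed.

Lemma sin_addsub (R : realType) (A B : R) :
  sin (A + B) + sin (A - B) = 2 * cos B * sin A.
Proof. by rewrite sinD sinB; ring. Qed.

Lemma Rintegral_shift_pair (R : realType) (P : probability R R) (T : R -> R)
    (xi v : R) :
  measurable_fun setT T -> (forall x, `|T x| <= 1) ->
  (forall A B, T (A + B) + T (A - B) = 2 * cos B * T A) ->
  Rintegral P setT (fun x => T (2 * pi * (x + v) * xi)) +
  Rintegral P setT (fun x => T (2 * pi * (x - v) * xi)) =
  2 * cos (2 * pi * v * xi) * Rintegral P setT (fun x => T (2 * pi * x * xi)).
Proof.
move=> mT T_le1 T_addsub.
have mTs (c : R) : measurable_fun setT (fun x : R => T (2 * pi * (x + c) * xi)).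
  apply: measurableT_comp => //; apply: measurable_funM => //.
  by apply: measurable_funM => //; exact: measurable_translation.
have mT0 : measurable_fun setT (fun x : R => T (2 * pi * x * xi)).
  by apply: measurableT_comp => //; do 2 apply: measurable_funM => //.
rewrite -RintegralD //; [|exact: integrable_le1|exact: integrable_le1].
rewrite -RintegralZl //; last exact: integrable_le1.
by apply: eq_Rintegral => x _; rewrite -T_addsub; congr (T _ + T _); ring.
Qed.

Section shift_mixture.
Context (R : realType) (mu : probability R R) (w : nat -> {nonneg R}).
Hypothesis w_sum :
  (fun N => \sum_(0 <= k < N) 2 * (w k)%:num) @ \oo --> (1 : R).

Definition shift_pair (k : nat) : {measure set R -> \bar R} :=
  measure_add (distribution mu (translation k%:R))
              (distribution mu (translation (- k%:R))).

Let weighted_pair k : {measure set R -> \bar R} := mscale (w k) (shift_pair k).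

(* The dummy [let] makes [shift_mixture] depend on [w_sum], so that its
   probability instance survives the end of the section. *)
Definition shift_mixture : set R -> \bar R :=
  let _ := w_sum in mseries weighted_pair 0.

HB.instance Definition _ := Measure.copy shift_mixture (mseries weighted_pair 0).

Lemma ge0_integral_shift_mixture (F : R -> \bar R) :
  measurable_fun setT F -> (forall x, 0 <= F x)%E ->
  (\int[shift_mixture]_x F x = \sum_(k <oo) ((w k)%:num%:E *
      (\int[mu]_x F (x + k%:R)%R + \int[mu]_x F (x - k%:R)%R)))%E.
Proof.
move=> mF F_ge0; rewrite ge0_integral_measure_series //.
apply: eq_eseriesr => k _.
rewrite ge0_integral_mscale //= ge0_integral_measure_add //.
by rewrite !ge0_integral_distribution.
Qed.

Lemma shift_mixture_setT : shift_mixture setT = 1%E.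
Proof.
have := ge0_integral_shift_mixture (measurable_cst 1%E) (fun _ => lee01).
rewrite integral_cst // mul1e => ->.
under eq_eseriesr => k _ do
  rewrite integral_cst //= probability_setT mul1e -EFinD -EFinM.
apply: eseries_EFin; under eq_fun do under eq_bigr do rewrite mulrC.
exact: w_sum.
Qed.

HB.instance Definition _ :=
  Measure_isProbability.Build _ _ _ shift_mixture shift_mixture_setT.

Lemma Rintegral_shift_mixture (h : R -> R) (L : R) :
  measurable_fun setT h -> (forall x, `|h x| <= 1) ->
  (fun N => \sum_(0 <= k < N) (w k)%:num *
     (Rintegral mu setT (fun x => h (x + k%:R)) +
      Rintegral mu setT (fun x => h (x - k%:R)))) @ \oo --> L ->
  Rintegral shift_mixture setT h = L.
Proof.
move=> mh h_le1 L_cvg.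
have mh_shift (c : R) : measurable_fun setT (fun x : R => h (x + c)).
  exact: measurableT_comp mh (measurable_translation c).
have h1_ge0 x : (0 <= (h x + 1)%:E)%E.
  by rewrite lee_fin; have := h_le1 x; rewrite ler_norml => /andP[? _]; lra.
apply: (@addIr _ 1); apply: EFin_inj; rewrite -integral_add1 //.
rewrite ge0_integral_shift_mixture //; last first.
  by apply/measurable_EFinP; exact: measurable_funD.
under eq_eseriesr => k _ do rewrite (integral_add1 _ (mh_shift _)) //
  (integral_add1 _ (mh_shift _)) // -EFinD -EFinM.
apply: eseries_EFin; apply: cvg_trans (cvgD L_cvg w_sum).
apply: near_eq_cvg; apply: nearW => N; rewrite fctE -big_split.
by apply: eq_bigr => k _; rewrite /=; ring.
Qed.

Lemma shift_mixture_supported (E : set R) :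
  (forall n : int, translation n%:~R @^-1` E = E) ->
  supported_on mu E -> supported_on shift_mixture E.
Proof.
move=> E_inv muE; have E_invC (n : int) : translation n%:~R @^-1` (~` E) = ~` E.
  by rewrite -preimage_setC E_inv.
apply: eseries0 => k _ _; rewrite /= /mscale /= /msum !big_ord_recl big_ord0 /=.
rewrite /distribution /pushforward pmulrn -intrN !E_invC muE.
by rewrite !adde0 mule0.
Qed.

Lemma Rintegral_trig_shift_mixture (T : R -> R) (xi L : R) :
  measurable_fun setT T -> (forall x, `|T x| <= 1) ->
  (forall A B, T (A + B) + T (A - B) = 2 * cos B * T A) ->
  (fun N => \sum_(0 <= k < N) 2 * (w k)%:num * cos (2 * pi * k%:R * xi))
    @ \oo --> L ->
  Rintegral shift_mixture setT (fun x => T (2 * pi * x * xi)) =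
  Rintegral mu setT (fun x => T (2 * pi * x * xi)) * L.
Proof.
move=> mT T_le1 T_addsub L_cvg; apply: Rintegral_shift_mixture => //.
  by apply: measurableT_comp => //; do 2 apply: measurable_funM => //.
apply: cvg_trans (cvgM (cvg_cst _) L_cvg).
apply: near_eq_cvg; apply: nearW => N; rewrite /= big_distrr /=.
by apply: eq_bigr => k _; rewrite Rintegral_shift_pair //; ring.
Qed.

Lemma fourier_abs_shift_mixture (xi L : R) :
  (fun N => \sum_(0 <= k < N) 2 * (w k)%:num * cos (2 * pi * k%:R * xi))
    @ \oo --> L ->
  fourier_abs shift_mixture xi = `|L| * fourier_abs mu xi.
Proof.
move=> L_cvg; rewrite /fourier_abs /fourier_re /fourier_im.
have mcos := continuous_measurable_fun (@continuous_cos R).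
have msin := continuous_measurable_fun (@continuous_sin R).
rewrite (Rintegral_trig_shift_mixture mcos (@cos_max R) (@cos_addsub R) L_cvg).
rewrite (Rintegral_trig_shift_mixture msin (@sin_max R) (@sin_addsub R) L_cvg).
set c := Rintegral mu _ _; set s := Rintegral mu _ _.
have -> : (c * L) ^+ 2 + (- (s * L)) ^+ 2 = L ^+ 2 * (c ^+ 2 + (- s) ^+ 2) by ring.
by rewrite sqrtrM ?sqr_ge0 // sqrtr_sqr.
Qed.

End shift_mixture.

Section cosine_weights.
Context (R : realType) (g : R -> R).
Hypotheses (coef_ge0 : forall k : nat, 0 <= cos_coef g k) (g0_neq0 : g 0 != 0).
Hypothesis S_cvg : forall xi : R, 0 <= xi ->
  (fun N : nat => cos_partial_sum g N xi) @ \oo --> g xi.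

Lemma cos_series_cvg (xi : R) :
  (fun N => \sum_(0 <= k < N) cos_coef g k * cos (2 * pi * k%:R * xi))
    @ \oo --> g `|xi|.
Proof.
have cos_norm (k : nat) : cos (2 * pi * k%:R * xi) = cos (2 * pi * k%:R * `|xi|).
  by case: (lerP 0 xi) => [/ger0_norm|/ltW/ler0_norm] ->; rewrite ?mulrN ?cosN.
rewrite -cvg_shiftS; apply: cvg_trans (S_cvg (normr_ge0 xi)).
by apply: near_eq_cvg; apply: nearW => N; apply: eq_bigr => k _; rewrite cos_norm.
Qed.

Lemma g0_gt0 : 0 < g 0.
Proof.
have coef_sum_cvg := cos_series_cvg (xi := 0); rewrite normr0 in coef_sum_cvg.
rewrite lt_neqAle eq_sym g0_neq0 -(cvg_lim _ coef_sum_cvg) //.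
apply: limr_ge; first by apply/cvg_ex; exists (g 0).
by near=> N; apply: sumr_ge0 => k _; rewrite mulr0 cos0 mulr1.
Unshelve. all: by end_near.
Qed.

Lemma cos_weight_ge0 (k : nat) : 0 <= cos_coef g k / (2 * g 0).
Proof. by rewrite divr_ge0 // mulr_ge0 // ltW // g0_gt0. Qed.

Definition cos_weight (k : nat) : {nonneg R} := NngNum (cos_weight_ge0 k).

Lemma cos_weight_series (xi : R) :
  (fun N => \sum_(0 <= k < N) 2 * (cos_weight k)%:num * cos (2 * pi * k%:R * xi))
    @ \oo --> g `|xi| / g 0.
Proof.
apply: cvg_trans (cvgM (cos_series_cvg (xi := xi)) (cvg_cst (g 0)^-1)).
apply: near_eq_cvg; apply: nearW => N; rewrite /= big_distrl /=.
by apply: eq_bigr => k _; field.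
Qed.

Lemma cos_weight_sum :
  (fun N => \sum_(0 <= k < N) 2 * (cos_weight k)%:num) @ \oo --> (1 : R).
Proof.
have := cos_weight_series (xi := 0); rewrite normr0 divff // => weight_cvg.
apply: cvg_trans weight_cvg.
apply: near_eq_cvg; apply: nearW => N.
by apply: eq_bigr => k _; rewrite mulr0 cos0 mulr1.
Qed.

End cosine_weights.

Theorem theorem1p6 (R : realType) (f g : R -> R) (M0 : R)
  (f_nonneg : forall x : R, M0 <= x -> 0 <= f x)
  (hf : in_F (@Liouville R) f)
  (g_per : forall x : R, 0 <= x -> g (x + 1) = g x)
  (g0 : g 0 != 0)
  (G_int : (@lebesgue_measure R).-integrable `[(- 2^-1), 2^-1] (fun x => (even_ext g x)%:E))
  (coef_nonneg : forall k : nat, 0 <= cos_coef g k)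
  (S_cvg : forall xi : R, 0 <= xi -> (fun N : nat => cos_partial_sum g N xi) @ \oo --> g xi) :
  in_F (@Liouville R) (fun x => `|g x| * f x).
Proof.
have [mu [c [M [mu_L [c_gt0 [M_gt0 mu_bound]]]]]] := hf.
have g0_pos := g0_gt0 coef_nonneg g0 S_cvg.
have w_sum := cos_weight_sum coef_nonneg g0 S_cvg.
exists (shift_mixture mu w_sum), (c / g 0), M.
split.
  exact: (shift_mixture_supported w_sum (@preimage_translation_Liouville R) mu_L).
split; first by rewrite divr_gt0.
split=> // xi M_le_xi.
have := cos_weight_series coef_nonneg g0 S_cvg (xi := xi).
move=> /(fourier_abs_shift_mixture mu w_sum) ->.
have -> : c / g 0 * (`|g `|xi| | * f `|xi|) = `|g `|xi| | / g 0 * (c * f `|xi|).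
  by ring.
rewrite normrM [`|_^-1|]gtr0_norm ?invr_gt0 //.
by apply: ler_wpM2l (mu_bound xi M_le_xi); rewrite divr_ge0 // ltW.
Qed.
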